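(* Let $m, n_0, n_1$ be positive integers and $n(\lambda) = n_0 + n_1\lambda$. There do not exist polynomials $x(\lambda), y(\lambda), z(\lambda)$ with real coefficients, two of which have degree $1$ and the third of which has degree $3$, whose constant terms $x_0 = x(0)$, $y_0 = y(0)$, $z_0 = z(0)$ are positive rational numbers satisfying $m/n_0 = 1/x_0 + 1/y_0 + 1/z_0$, and which satisfy $$\frac{m}{n(\lambda)} = \frac{1}{x(\lambda)} + \frac{1}{y(\lambda)} + \frac{1}{z(\lambda)}$$ identically in $\lambda$.
   Context: $\lambda$ is an indeterminate; the equation is an identity of rational functions in $\lambda$. *)

From HB Require Import structures.
From mathcomp Require Import all_boot all_order all_algebra fraction.
Set Implicit Arguments. Unset Strict Implicit. Unset Printing Implicit Defensive.
Import Order.TTheory GRing.Theory Num.Theory.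
Local Open Scope ring_scope.

Definition has_deg (R : realFieldType) (p : {poly R}) (d : nat) : Prop :=
  size p = d.+1.

Definition deg_113 (R : realFieldType) (x y z : {poly R}) : Prop :=
  [/\ has_deg x 1, has_deg y 1 & has_deg z 3] \/
  [/\ has_deg x 1, has_deg y 3 & has_deg z 1] \/
  [/\ has_deg x 3, has_deg y 1 & has_deg z 1].

Definition pos_rat (R : realFieldType) (a : R) : Prop :=
  exists q : rat, 0 < q /\ a = ratr q.

Notation "x %:F" := (@tofrac _ x).

From HB Require Import structures.
From mathcomp Require Import all_boot all_order all_algebra fraction.
From mathcomp Require Import zify ring.
Import Order.TTheory GRing.Theory Num.Theory.
Local Open Scope ring_scope.

(* Clearing denominators, m x y z = n (y z + x z + x y).  If x, y have degree 1
   and z degree 3, then z divides n x y with a constant cofactor c, i.e.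
   m x y - n (x + y) = c, and c > 0 by comparing constant terms.  Hence
   (m x - n) (m y - n) = m c + n^2: a product of two linear factors, which has
   a real root, equals a quadratic that is positive everywhere.  Neither the
   rationality of the constant terms nor their identity m/n0 = ... is needed. *)

Lemma pos_rat_gt0 (R : realFieldType) (a : R) : pos_rat a -> 0 < a.
Proof. by case=> q [q_gt0 ->]; rewrite ltr0q. Qed.

Lemma sum_inv3_clear_denoms {F : fieldType} {a n x y z : F} :
    n != 0 -> x != 0 -> y != 0 -> z != 0 ->
  a / n = x^-1 + y^-1 + z^-1 -> a * x * y * z = n * (y * z + x * z + x * y).
Proof.
move=> n0 x0 y0 z0 e; rewrite -(divfK n0 a) e.
by field; rewrite x0 y0 z0.
Qed.

Lemma tofrac_sum_inv3 {R : idomainType} (a n x y z : {poly R}) :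
    n != 0 -> x != 0 -> y != 0 -> z != 0 ->
    a%:F / n%:F = (x%:F)^-1 + (y%:F)^-1 + (z%:F)^-1 ->
  a * x * y * z = n * (y * z + x * z + x * y).
Proof.
rewrite -!(tofrac_eq0 (R := {poly R})) => n0 x0 y0 z0.
move=> /(sum_inv3_clear_denoms n0 x0 y0 z0) /eqP.
by rewrite -!tofracM -!tofracD -tofracM tofrac_eq => /eqP.
Qed.

Lemma size_mul_eq_sizel {R : idomainType} (a p : {poly R}) :
  a != 0 -> size (a * p) = size a -> size p = 1%N.
Proof.
move=> a0; have [-> | p0] := eqVneq p 0.
  by rewrite mulr0 size_poly0 => /esym/eqP; rewrite size_poly_eq0 (negPf a0).
have := size_poly_gt0 a; rewrite a0 size_mul //; lia.
Qed.

Lemma mul_size2_root {F : fieldType} (u v : {poly F}) :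
  (size u <= 2)%N -> (size v <= 2)%N -> size (u * v) = 3%N -> exists t, root (u * v) t.
Proof.
move=> su sv suv.
have : u * v != 0 by rewrite -size_poly_eq0 suv.
rewrite mulf_eq0 => /norP[u0 v0].
have /poly2_root[t ut] : size u = 2%N.
  (* [set] identifies the occurrences of [size u] that differ in their
     structure instances, which [lia] would treat as distinct atoms. *)
  by move: su sv suv; rewrite size_mul //; set a := size u; set b := size v; lia.
by exists t; rewrite rootM ut.
Qed.

Lemma size_polyC_add_sqr {R : idomainType} (c : R) (n : {poly R}) :
  size n = 2%N -> size (c%:P + n * n) = 3%N.
Proof.
move=> sn; have n0 : n != 0 by rewrite -size_poly_eq0 sn.
have snn : size (n * n) = 3%N by rewrite size_mul // sn.
by rewrite addrC size_polyDl snn // (leq_ltn_trans (size_polyC_leq1 c)).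
Qed.

Lemma size_scale_sub_le2 {R : idomainType} (m : R) {x n : {poly R}} :
  size x = 2%N -> size n = 2%N -> (size (m *: x - n)%R <= 2)%N.
Proof.
move=> sx sn; rewrite (leq_trans (size_polyD _ _)) // geq_max size_polyN sn.
by rewrite (leq_trans (size_scale_leq _ _)) ?sx.
Qed.

Section Degree113.

Variables (R : realFieldType) (m : R) (n x y z : {poly R}).
Hypotheses (m_gt0 : 0 < m) (sn : size n = 2%N) (sx : size x = 2%N)
  (sy : size y = 2%N) (sz : size z = 4%N).
Hypotheses (n0_gt0 : 0 < n.[0]) (x0_gt0 : 0 < x.[0]) (y0_gt0 : 0 < y.[0])
  (z0_gt0 : 0 < z.[0]).

Let horner0_gt0_neq0 {p : {poly R}} : 0 < p.[0] -> p != 0.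
Proof. by apply: contraTneq => ->; rewrite horner0 ltxx. Qed.

Lemma poly_sum_inv3_deg113_neq :
  m%:P * x * y * z != n * (y * z + x * z + x * y).
Proof.
apply/eqP => e.
set P := m%:P * x * y - n * (x + y).
have zP : z * P = n * x * y.
  have -> : z * P = m%:P * x * y * z - n * (y * z + x * z + x * y) + n * x * y.
    by rewrite /P; ring.
  by rewrite e subrr add0r.
have sP : size P = 1%N.
  apply: (size_mul_eq_sizel z P (horner0_gt0_neq0 z0_gt0)).
  by rewrite zP !size_mul ?mulf_neq0 ?horner0_gt0_neq0 // sn sx sy sz.
have PE := size1_polyC (eq_leq sP); set c := P`_0 in PE.
have c_gt0 : 0 < c.
  have := congr1 (horner^~ 0) zP; rewrite PE !hornerM hornerC => e0.
  by rewrite -(pmulr_rgt0 _ z0_gt0) e0 !mulr_gt0.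
have Q : (m *: x - n) * (m *: y - n) = (m * c)%:P + n * n.
  by rewrite polyCM -PE /P -!mul_polyC; ring.
have sQ : size ((m *: x - n) * (m *: y - n)) = 3%N.
  by rewrite Q size_polyC_add_sqr.
have [t] := mul_size2_root _ _ (size_scale_sub_le2 m sx sn)
  (size_scale_sub_le2 m sy sn) sQ.
rewrite Q /root !hornerE; apply/negP; rewrite gt_eqF //.
by rewrite ltr_wpDr ?sqr_ge0 ?mulr_gt0.
Qed.

Lemma frac_sum_inv3_deg113_neq :
  (m%:P)%:F / n%:F != (x%:F)^-1 + (y%:F)^-1 + (z%:F)^-1.
Proof.
apply/eqP => /tofrac_sum_inv3 e; move/negP: poly_sum_inv3_deg113_neq; apply.
by rewrite e ?horner0_gt0_neq0.
Qed.

End Degree113.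

Arguments frac_sum_inv3_deg113_neq {R m n x y z}.

Theorem lemma5 (R : realFieldType) (m n0 n1 : nat) :
  (0 < m)%N -> (0 < n0)%N -> (0 < n1)%N ->
  ~ exists x y z : {poly R},
      deg_113 x y z /\
      [/\ pos_rat x.[0], pos_rat y.[0] & pos_rat z.[0]] /\
      (m%:R / n0%:R : R) = x.[0]^-1 + y.[0]^-1 + z.[0]^-1 /\
      ((m%:R)%:P)%:F / (n0%:R%:P + n1%:R *: 'X : {poly R})%:F
        = (x%:F)^-1 + (y%:F)^-1 + (z%:F)^-1.
Proof.
move=> m_gt0 n0_gt0 n1_gt0 [x [y [z [deg [[/pos_rat_gt0 x0 /pos_rat_gt0 y0
  /pos_rat_gt0 z0] [_ e]]]]]].
set n := (n0%:R%:P + n1%:R *: 'X : {poly R}) in e.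
have sn : size n = 2%N.
  rewrite /n addrC -mul_polyC size_MXaddC polyC_eq0 size_polyC pnatr_eq0.
  by rewrite eqn0Ngt n1_gt0.
have hn : 0 < n.[0] by rewrite /n !hornerE ltr0n.
have hm : 0 < m%:R :> R by rewrite ltr0n.
case: deg => [[sx sy sz] | [[sx sy sz] | [sx sy sz]]].
- apply: (negP (frac_sum_inv3_deg113_neq hm sn sx sy sz hn x0 y0 z0)).
  exact/eqP.
- apply: (negP (frac_sum_inv3_deg113_neq hm sn sx sz sy hn x0 z0 y0)).
  by apply/eqP; rewrite e addrAC.
- apply: (negP (frac_sum_inv3_deg113_neq hm sn sy sz sx hn y0 z0 x0)).
  by apply/eqP; rewrite e -addrA addrC.
Qed.
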